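(* Let $\mathcal{A}$ be a finite set of positive integers, let $w \leqslant z$ be real numbers, and let $m_1, m_2$ be real numbers with $(m_1, m_2) \in \mathcal{U}$. Then $$ S(\mathcal{A}, z) \leqslant S(\mathcal{A}, w) - \frac{m_1 + m_2 - 1}{m_1 m_2} \sum_{w \leqslant p_1 < z} S(\mathcal{A}_{p_1}, w) + \frac{2}{m_1 m_2} \sum_{w \leqslant p_2 < p_1 < z} S(\mathcal{A}_{p_1 p_2}, w). $$
   Context: Throughout, $p, p_1, p_2, \dots$ denote prime numbers. For a finite set $\mathcal{A}$ of positive integers and a positive integer $d$, $\mathcal{A}_d = \{a : ad \in \mathcal{A}\}$. For real $z$, $S(\mathcal{A}, z)$ denotes the number of $a \in \mathcal{A}$ having no prime factor less than $z$. Let $T = (0,1] \cup [2,3] \cup [4,5] \cup \cdots$, i.e. $T$ is the union of $(0,1]$ and the intervals $[k-1,k]$ over all odd integers $k \geqslant 3$, and let $\mathcal{U} = \{(x_1, x_2) : x_1, x_2 \in T,\ |x_1 - x_2| \leqslant 1\}$. *)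

From mathcomp Require Import all_boot all_order all_algebra.
From mathcomp Require Import reals.
Set Implicit Arguments. Unset Strict Implicit. Unset Printing Implicit Defensive.
Import Order.TTheory GRing.Theory Num.Theory.
Local Open Scope ring_scope.

Section Defs.
Variable R : realType.

Definition sift (A : seq nat) (z : R) : nat :=
  count (fun a => ~~ has (fun p => p%:R < z) (primes a)) A.

(* A_d = { a : a d \in A }  (for d > 0 this is the list of a / d, d | a, a in A) *)
Definition subA (A : seq nat) (d : nat) : seq nat :=
  [seq (a %/ d)%N | a <- A & (d %| a)%N].

Definition primes_in (w z : R) : seq nat :=
  [seq p <- iota 0 (Num.truncn z).+1 | prime p && (w <= p%:R) && (p%:R < z)].

Definition inT (x : R) : Prop :=
  (0 < x <= 1) \/ (exists k : nat, odd k /\ (3 <= k)%N /\ (k.-1)%:R <= x <= k%:R).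

Definition inU (x1 x2 : R) : Prop := inT x1 /\ inT x2 /\ `|x1 - x2| <= 1.
End Defs.

From mathcomp Require Import all_boot all_order all_algebra.
From mathcomp Require Import reals.
From mathcomp Require Import zify ring lra.
Import Order.TTheory GRing.Theory Num.Theory.

(* Let a in A have no prime factor below w, and let n be the number of primes
   p in [w, z) dividing a.  Then a is counted 1, n and n(n-1)/2 times by the three
   sums on the right, so it contributes
     1 - (m1 + m2 - 1) n / (m1 m2) + n (n - 1) / (m1 m2) = (n - m1)(n - m2) / (m1 m2),
   which is 1 when n = 0, i.e. when a is counted by S(A, z).  This weight is
   nonnegative because no integer lies strictly between m1 and m2 when
   (m1, m2) is in U: it would be the ceiling of one of them, hence odd, and the
   floor of the other, hence even. *)

Set Implicit Arguments.
Unset Strict Implicit.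
Unset Printing Implicit Defensive.

Lemma count_sum (T : Type) (a : pred T) (s : seq T) :
  count a s = \sum_(x <- s) a x.
Proof. by rewrite -sum1_count big_mkcond; apply: eq_bigr => x _; case: (a x). Qed.

Lemma sum_ltn_pairs_uniq (t : seq nat) : uniq t ->
  (\sum_(x <- t) \sum_(y <- t | y < x) 1).*2 + size t = size t ^ 2.
Proof.
move=> t_uniq.
have diag : \sum_(x <- t) \sum_(y <- t | y == x) 1 = size t.
  rewrite -[RHS]sum1_size big_seq [RHS]big_seq; apply: eq_bigr => x xt.
  by rewrite sum1_count -[count _ _]/(count_mem x t) count_uniq_mem // xt.
have sym : \sum_(x <- t) \sum_(y <- t | y < x) 1 = \sum_(x <- t) \sum_(y <- t | x < y) 1.
  under eq_bigr do rewrite big_mkcond; under [RHS]eq_bigr do rewrite big_mkcond.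
  by rewrite exchange_big.
have square : \sum_(x <- t) \sum_(y <- t) 1 = size t ^ 2.
  by rewrite sum1_size big_const_seq count_predT iter_addn_0.
have trichotomy x : \sum_(y <- t) 1 =
    \sum_(y <- t | y < x) 1 + \sum_(y <- t | x < y) 1 + \sum_(y <- t | y == x) 1.
  rewrite sum1_size !sum1_count; elim: (t) => //= y s ->; case: ltngtP => _ /=; lia.
rewrite -square (eq_bigr _ (fun x _ => trichotomy x)) !big_split /= -sym diag.
by rewrite -addnn.
Qed.

Lemma sum_ltn_pairs (s : seq nat) (Q : pred nat) : uniq s ->
  (\sum_(x <- s) \sum_(y <- s | y < x) (Q x && Q y)).*2 + count Q s = count Q s ^ 2.
Proof.
move=> s_uniq; rewrite -size_filter -sum_ltn_pairs_uniq ?filter_uniq //.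
congr (_.*2 + _); rewrite big_filter [RHS]big_mkcond; apply: eq_bigr => x _.
case: (Q x) => /=; last by rewrite big1.
rewrite big_filter_cond big_mkcond [RHS]big_mkcond; apply: eq_bigr => y _.
by case: (Q y); case: (y < x).
Qed.

Section Sieve.
Variables (R : realType) (w : R).

Definition rough (a : nat) : bool := ~~ has (fun p => (p%:R < w)%R) (primes a).

Lemma siftE (A : seq nat) : sift A w = count rough A.
Proof. by []. Qed.

Lemma roughM (m n : nat) : 0 < m -> 0 < n -> rough (m * n) = rough m && rough n.
Proof.
move=> m_gt0 n_gt0; rewrite /rough -negb_or -has_cat; congr negb.
by apply: eq_has_r => p; rewrite mem_cat primesM.
Qed.

Lemma rough_prime (p : nat) : prime p -> (w <= p%:R)%R -> rough p.
Proof. by move=> p_pr p_ge; rewrite /rough primes_prime //= orbF -leNgt. Qed.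

Lemma rough_divn (a d : nat) : 0 < a -> d %| a -> rough d -> rough (a %/ d) = rough a.
Proof.
move=> a_gt0 d_dvd_a d_rough; have d_gt0 := dvdn_gt0 a_gt0 d_dvd_a.
have q_gt0 : 0 < a %/ d by rewrite divn_gt0 // dvdn_leq.
by rewrite -{2}(divnK d_dvd_a) roughM // d_rough andbT.
Qed.

Variable A : seq nat.
Hypothesis A_gt0 : all (fun a => 0 < a) A.

Lemma sift_subA (d : nat) :
  rough d -> sift (subA A d) w = count (fun a => rough a && (d %| a)) A.
Proof.
move=> d_rough; rewrite /sift /subA count_map count_filter.
apply: eq_in_count => a aA /=.
case: (boolP (d %| a)) => [d_dvd_a | _]; rewrite ?andbF // !andbT.
by rewrite -/(rough _) rough_divn // (allP A_gt0).
Qed.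

Variable P : seq nat.
Hypothesis P_rough_primes : forall p, p \in P -> prime p /\ (w <= p%:R)%R.

Lemma sum_sift_subA :
  \sum_(p <- P) sift (subA A p) w = \sum_(a <- A) rough a * count (dvdn^~ a) P.
Proof.
transitivity (\sum_(p <- P) \sum_(a <- A) rough a * (p %| a)).
  rewrite big_seq [RHS]big_seq; apply: eq_bigr => p /P_rough_primes[p_pr p_ge].
  rewrite sift_subA ?rough_prime // count_sum.
  by apply: eq_bigr => a _; case: (rough a); rewrite ?mul1n.
rewrite exchange_big; apply: eq_bigr => a _.
by rewrite -big_distrr count_sum.
Qed.

Lemma sum_sift_subA_pairs :
  \sum_(p1 <- P) \sum_(p2 <- P | p2 < p1) sift (subA A (p1 * p2)) w =
  \sum_(a <- A) rough a * \sum_(p1 <- P) \sum_(p2 <- P | p2 < p1) ((p1 %| a) && (p2 %| a)).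
Proof.
transitivity (\sum_(p1 <- P) \sum_(p2 <- P | p2 < p1) \sum_(a <- A)
                rough a * ((p1 %| a) && (p2 %| a))).
  rewrite big_seq [RHS]big_seq; apply: eq_bigr => p1 /P_rough_primes[p1_pr p1_ge].
  rewrite big_seq_cond [RHS]big_seq_cond; apply: eq_bigr => p2 /andP[].
  move=> /P_rough_primes[p2_pr p2_ge] p2_lt_p1.
  have coprime_p12 : coprime p1 p2.
    by rewrite prime_coprime // dvdn_prime2 // gtn_eqF.
  rewrite sift_subA; last by rewrite roughM ?prime_gt0 // !rough_prime.
  rewrite count_sum; apply: eq_bigr => a _.
  by rewrite Gauss_dvd //; case: (rough a); rewrite ?mul1n.
under eq_bigr do rewrite exchange_big.
rewrite exchange_big; apply: eq_bigr => a _.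
by rewrite big_distrr; apply: eq_bigr => p1 _; rewrite big_distrr.
Qed.

End Sieve.

Section PrimesIn.
Variables (R : realType) (w z : R).

Lemma mem_primes_in (p : nat) :
  (p \in primes_in w z) = [&& prime p, (w <= p%:R)%R & (p%:R < z)%R].
Proof.
rewrite mem_filter mem_iota add0n ltnS /= -!andbA.
case: (boolP (p%:R < z)%R) => p_lt_z; rewrite ?andbF //= !andbT.
have z_ge0 : (0 <= z)%R by apply: le_trans (ltW p_lt_z).
by rewrite truncn_ge_nat // (ltW p_lt_z) andbT.
Qed.

Lemma primes_in_uniq : uniq (primes_in w z).
Proof. by rewrite filter_uniq // iota_uniq. Qed.

Lemma rough_primes_in (a : nat) : 0 < a -> (w <= z)%R ->
  rough z a = rough w a && ~~ has (dvdn^~ a) (primes_in w z).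
Proof.
move=> a_gt0 w_le_z; rewrite /rough -negb_or; congr negb; apply/hasP/orP.
  case=> q; rewrite mem_primes => /and3P[q_pr _ q_dvd_a] q_lt_z.
  case: (ltrP q%:R w) => [q_lt_w | q_ge_w].
    by left; apply/hasP; exists q; rewrite ?mem_primes ?q_pr ?a_gt0.
  by right; apply/hasP; exists q; rewrite // mem_primes_in q_pr q_ge_w.
case=> /hasP[q].
  by move=> q_in q_lt_w; exists q; last exact: lt_le_trans w_le_z.
rewrite mem_primes_in => /and3P[q_pr _ q_lt_z] q_dvd_a; exists q => //.
by rewrite mem_primes q_pr a_gt0.
Qed.

End PrimesIn.

Local Open Scope ring_scope.

Section SieveWeights.
Variable R : realType.
Implicit Types (x : R) (n k : nat).

Lemma inT_gt0 x : inT x -> 0 < x.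
Proof.
case=> [/andP[] // | [k [_ [k_ge3 /andP[k_le_x _]]]]].
have : (2 <= k.-1)%N by lia.
by rewrite -(ler_nat R) => two_le; lra.
Qed.

Lemma inT_ceil_odd x n : inT x -> n%:R - 1 < x -> x < n%:R -> odd n.
Proof.
case=> [/andP[x_gt0 x_le1] | [k [k_odd [k_ge3 /andP[k_le_x x_le_k]]]]] n_lt n_gt.
  have : (0 < n)%N by rewrite -(ltr0n R); lra.
  have : (n < 2)%N by rewrite -(ltr_nat R); lra.
  by case: n {n_lt n_gt} => [|[|n]].
have : (n < k.+1)%N by rewrite -(ltr_nat R) -addn1 natrD; lra.
have : (k.-1 < n)%N by rewrite -(ltr_nat R); lra.
by move=> k_le_n n_le_k; have -> : n = k by lia.
Qed.

Lemma inT_floor_even x n : inT x -> n%:R < x -> x < n%:R + 1 -> ~~ odd n.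
Proof.
case=> [/andP[x_gt0 x_le1] | [k [k_odd [k_ge3 /andP[k_le_x x_le_k]]]]] n_lt n_gt.
  have : (n < 1)%N by rewrite -(ltr_nat R); lra.
  by case: n {n_lt n_gt}.
have : (n < k)%N by rewrite -(ltr_nat R); lra.
have : (k.-1 < n.+1)%N by rewrite -(ltr_nat R) -addn1 natrD; lra.
move=> k_le_n n_lt_k; have -> : n = k.-1 by lia.
by case: k k_odd {k_le_n n_lt_k k_ge3 k_le_x x_le_k}.
Qed.

Lemma inU_sym (m1 m2 : R) : inU m1 m2 -> inU m2 m1.
Proof. by case=> [m1_T [m2_T m12_le1]]; split; last split; rewrite // distrC. Qed.

Lemma inU_no_nat_between (m1 m2 : R) n : inU m1 m2 -> m1 < n%:R -> n%:R < m2 -> False.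
Proof.
case=> [m1_T [m2_T]]; rewrite ler_norml => /andP[m21_le1 _] m1_lt_n n_lt_m2.
have n_odd : odd n by apply: (inT_ceil_odd m1_T) => //; lra.
have n_even : ~~ odd n by apply: (inT_floor_even m2_T) => //; lra.
by rewrite n_odd in n_even.
Qed.

Lemma inU_nat_subrM_ge0 (m1 m2 : R) n : inU m1 m2 -> 0 <= (n%:R - m1) * (n%:R - m2).
Proof.
move=> U; case: (ltrgtP n%:R m1) => [n_lt_m1 | m1_lt_n | <-]; last by rewrite subrr mul0r.
  case: (ltrgtP n%:R m2) => [n_lt_m2 | m2_lt_n | <-]; last by rewrite subrr mulr0.
  - by rewrite mulr_le0 // subr_le0 ltW.
  - by case: (inU_no_nat_between (inU_sym U) m2_lt_n n_lt_m1).
case: (ltrgtP n%:R m2) => [n_lt_m2 | m2_lt_n | <-]; last by rewrite subrr mulr0.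
- by case: (inU_no_nat_between U m1_lt_n n_lt_m2).
- by rewrite mulr_ge0 // subr_ge0 ltW.
Qed.

Lemma indicator_le_sieve_weight (m1 m2 : R) n k : inU m1 m2 -> (k.*2 + n = n ^ 2)%N ->
  ((n == 0)%N)%:R <= 1 - (m1 + m2 - 1) / (m1 * m2) * n%:R + 2 / (m1 * m2) * k%:R.
Proof.
move=> U k_pairs; have [/inT_gt0 m1_gt0 [/inT_gt0 m2_gt0 _]] := U.
have k_eq : k%:R = (n%:R ^+ 2 - n%:R) / 2 :> R.
  by rewrite -natrX -k_pairs natrD addrK -mul2n natrM; field.
have -> : 1 - (m1 + m2 - 1) / (m1 * m2) * n%:R + 2 / (m1 * m2) * k%:R =
          (n%:R - m1) * (n%:R - m2) / (m1 * m2).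
  by rewrite k_eq; field; rewrite !lt0r_neq0.
case: (n =P 0)%N => [-> | _].
  by rewrite /= !sub0r !mulrNN divff // mulf_neq0 // lt0r_neq0.
by rewrite divr_ge0 ?inU_nat_subrM_ge0 // mulr_ge0 // ltW.
Qed.

End SieveWeights.

Theorem theorem2 (R : realType) (A : seq nat) (w z m1 m2 : R) :
  uniq A -> all (fun a => (0 < a)%N) A ->
  w <= z -> inU m1 m2 ->
  (sift A z)%:R <=
    (sift A w)%:R
    - (m1 + m2 - 1) / (m1 * m2) * \sum_(p1 <- primes_in w z) (sift (subA A p1) w)%:R
    + 2 / (m1 * m2) * \sum_(p1 <- primes_in w z) \sum_(p2 <- primes_in w z | (p2 < p1)%N)
         (sift (subA A (p1 * p2)) w)%:R.
Proof.
move=> _ A_gt0 w_le_z U.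
set P := primes_in w z.
have P_rough_primes p : p \in P -> prime p /\ w <= p%:R.
  by rewrite mem_primes_in => /and3P[].
set n := fun a => count (dvdn^~ a) P.
set pairs := fun a =>
  (\sum_(p1 <- P) \sum_(p2 <- P | p2 < p1) ((p1 %| a) && (p2 %| a)))%N.
have sift_z : sift A z = (\sum_(a <- A) (rough w a && (n a == 0)))%N.
  rewrite siftE count_sum big_seq [RHS]big_seq; apply: eq_bigr => a aA.
  by rewrite (@rough_primes_in _ w) ?(allP A_gt0) // has_count -eqn0Ngt.
have sum_single :
    \sum_(p <- P) (sift (subA A p) w)%:R = \sum_(a <- A) (rough w a * n a)%:R :> R.
  by rewrite -!natr_sum sum_sift_subA.
have sum_pairs : \sum_(p1 <- P) \sum_(p2 <- P | (p2 < p1)%N) (sift (subA A (p1 * p2)) w)%:R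
                 = \sum_(a <- A) (rough w a * pairs a)%:R :> R.
  by under eq_bigr do rewrite -natr_sum; rewrite -!natr_sum sum_sift_subA_pairs.
rewrite sift_z siftE count_sum !natr_sum sum_single sum_pairs.
rewrite !mulr_sumr -sumrN -!big_split /=.
apply: ler_sum => a _; case: (rough w a) => /=; last by rewrite !mulr0 subr0 addr0.
rewrite !mul1n; apply: indicator_le_sieve_weight => //.
exact: sum_ltn_pairs (primes_in_uniq w z).
Qed.
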